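(* Let $m\ge 2$, let $p\in\mathbb{R}^m$ be a probability vector and let $L(y,g)=\max_{j\in\mathcal{Y}}\{\mathbf{1}[j\ne y]+g_j-g_y\}$ be the multiclass hinge loss. Then $$\inf_{g\in\mathbb{R}^m}\sum_{l=1}^m p_l\,L(l,g)=\min\{1,\;2(1-\max_{y}p_y)\},$$ and the infimum is attained: if $\max_y p_y<\tfrac12$ by every constant vector $g=c\mathbf{1}$, $c\in\mathbb{R}$; and if $p_{y^*}=\max_y p_y\ge\tfrac12$ by $g=c\mathbf{1}+e_{y^*}$ for every $c\in\mathbb{R}$.
   Context: Classes $\mathcal{Y}=\{1,\dots,m\}$; $\mathbf{1}$ is the all-ones vector and $e_y$ the $y$-th standard basis vector of $\mathbb{R}^m$. *)

From HB Require Import structures.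
From mathcomp Require Import all_boot all_order all_algebra.
Set Implicit Arguments. Unset Strict Implicit. Unset Printing Implicit Defensive.
Import Order.TTheory GRing.Theory Num.Theory.
Local Open Scope ring_scope.

(* Classes are 'I_m (i.e. {0,...,m-1}, standing for {1,...,m}); vectors in
   R^m are functions 'I_m -> R. *)

Definition hinge_term (R : realFieldType) (m : nat) (y : 'I_m) (g : 'I_m -> R)
  (j : 'I_m) : R := (j != y)%:R + g j - g y.

(* L(y,g) = max_j { 1[j<>y] + g_j - g_y }.  The big max is seeded with the
   term for j = y itself (which belongs to the family), so this is exactly the
   maximum over all j. *)
Definition hinge_loss (R : realFieldType) (m : nat) (y : 'I_m) (g : 'I_m -> R) : R :=
  \big[Num.max/hinge_term y g y]_(j < m) hinge_term y g j.

Definition hinge_risk (R : realFieldType) (m : nat) (p g : 'I_m -> R) : R :=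
  \sum_(l < m) p l * hinge_loss l g.

(* Let k be a class of largest score and d >= 0 the gap between g_k and the
   second largest score.  Every class l <> k pays at least 1 + d (compare with
   j = k), while k itself pays at least max(0, 1 - d).  The risk is thus at
   least p_k max(0, 1 - d) + (1 - p_k)(1 + d), which is piecewise linear in d
   and minimal at d = 0 (value 1) if p_k <= 1/2, and at d = 1 (value
   2 (1 - p_k)) otherwise.  The two announced score vectors realise these two
   values, with every loss equal to 1, resp. to 0 on y* and 2 elsewhere. *)
From HB Require Import structures.
From mathcomp Require Import all_boot all_order all_algebra.
From mathcomp Require Import lra.
Import Order.TTheory GRing.Theory Num.Theory.
Local Open Scope ring_scope.

Lemma exists_neq_ord {m : nat} (i : 'I_m) : (2 <= m)%N -> exists j : 'I_m, j != i.
Proof.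
move=> hm; pose i0 : 'I_m := Ordinal (ltnW hm).
have [->|ne] := eqVneq i i0; last by exists i0; rewrite eq_sym.
by exists (Ordinal hm); apply/eqP => /(congr1 val).
Qed.

Lemma min_le_margin_risk (R : realFieldType) (q d a : R) :
  0 <= q <= 1 -> 0 <= d -> 0 <= a -> 1 - d <= a ->
  Num.min 1 (2 * (1 - q)) <= q * a + (1 - q) * (1 + d).
Proof.
move=> /andP[q0 q1] d0 a0 ad; rewrite ge_min.
have [d1|d1] := lerP d 1; last by apply/orP; right; nra.
have [q2|q2] := lerP q 2^-1; apply/orP; [left|right]; nra.
Qed.

Section HingeLoss.
Variables (R : realFieldType) (m : nat).
Implicit Types (p g : 'I_m -> R) (c : R).

Lemma hinge_term_le_loss (y j : 'I_m) g : hinge_term y g j <= hinge_loss y g.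
Proof. exact: le_bigmax. Qed.

Lemma hinge_loss_le (y : 'I_m) g b :
  (forall j, hinge_term y g j <= b) -> hinge_loss y g <= b.
Proof. by move=> le_b; apply: bigmax_le. Qed.

Lemma hinge_loss_ge0 (y : 'I_m) g : 0 <= hinge_loss y g.
Proof.
by have := hinge_term_le_loss y y g; rewrite /hinge_term eqxx add0r subrr.
Qed.

Lemma hinge_loss_const (y : 'I_m) c : (2 <= m)%N -> hinge_loss y (fun=> c) = 1.
Proof.
move=> hm; apply/eqP; rewrite eq_le; apply/andP; split.
  by apply: hinge_loss_le => j; rewrite /hinge_term addrK; case: (j != y).
have [j jy] := exists_neq_ord y hm.
by have := hinge_term_le_loss y j (fun=> c); rewrite /hinge_term jy addrK.
Qed.

Lemma hinge_loss_bump (y l : 'I_m) c :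
  hinge_loss l (fun j => c + (j == y)%:R) = (l != y)%:R *+ 2.
Proof.
apply/eqP; rewrite eq_le; apply/andP; split.
  apply: hinge_loss_le => j; rewrite /hinge_term.
  case: (eqVneq l y) => [->|ly]; last by case: (j != l); case: (j == y) => /=; lra.
  by case: (eqVneq j y) => /=; lra.
have := hinge_term_le_loss l y (fun j => c + (j == y)%:R).
by rewrite /hinge_term eqxx eq_sym; case: (l == y) => /=; lra.
Qed.

Lemma hinge_risk_const p c :
  (2 <= m)%N -> \sum_(l < m) p l = 1 -> hinge_risk p (fun=> c) = 1.
Proof.
move=> hm hp1; rewrite /hinge_risk -[RHS]hp1.
by apply: eq_bigr => l _; rewrite hinge_loss_const // mulr1.
Qed.

Lemma hinge_risk_bump p (y : 'I_m) c :
  \sum_(l < m) p l = 1 -> hinge_risk p (fun j => c + (j == y)%:R) = 2 * (1 - p y).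
Proof.
move=> hp1; have -> : 1 - p y = \sum_(l < m | l != y) p l.
  by move: hp1; rewrite (bigD1 y) //=; lra.
rewrite mulr_sumr /hinge_risk (bigD1 y) //= hinge_loss_bump eqxx mul0rn mulr0 add0r.
by apply: eq_bigr => l ly; rewrite hinge_loss_bump ly mulrC.
Qed.

Lemma hinge_risk_ge_min p g (ystar : 'I_m) :
  (2 <= m)%N -> (forall l, 0 <= p l) -> \sum_(l < m) p l = 1 ->
  (forall y, p y <= p ystar) ->
  Num.min 1 (2 * (1 - p ystar)) <= hinge_risk p g.
Proof.
move=> hm hp0 hp1 hmax.
pose k := [arg max_(i > ystar) g i]%O.
have gk j : g j <= g k by rewrite /k; case: arg_maxP => // i _; apply.
have [j0 j0k] := exists_neq_ord k hm.
pose k2 := [arg max_(j > j0 | j != k) g j]%O.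
have [k2k gk2] : k2 != k /\ forall j, j != k -> g j <= g k2.
  by rewrite /k2; case: arg_maxP.
pose d := g k - g k2.
have Lk1 : 1 - d <= hinge_loss k g.
  by have := hinge_term_le_loss k k2 g; rewrite /hinge_term k2k /d /=; lra.
have Ll l : l != k -> 1 + d <= hinge_loss l g.
  move=> lk; have := hinge_term_le_loss l k g; rewrite /hinge_term eq_sym lk /d /=.
  by have := gk2 l lk; lra.
have sum_others : \sum_(l < m | l != k) p l = 1 - p k.
  by move: hp1; rewrite (bigD1 k) //=; lra.
have risk_ge : p k * hinge_loss k g + (1 - p k) * (1 + d) <= hinge_risk p g.
  rewrite /hinge_risk (bigD1 k) //= lerD2l -sum_others big_distrl /=.
  by apply: ler_sum => l lk; rewrite ler_wpM2l // Ll.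
have pk_range : 0 <= p k <= 1.
  by rewrite hp0 -hp1 (bigD1 k) //= lerDl sumr_ge0.
have min_mono : Num.min 1 (2 * (1 - p ystar)) <= Num.min 1 (2 * (1 - p k)).
  by rewrite le_min ge_min lexx /= ge_min; apply/orP; right; have := hmax k; lra.
apply: (le_trans min_mono); apply: le_trans risk_ge.
apply: min_le_margin_risk Lk1 => //; last exact: hinge_loss_ge0.
by rewrite subr_ge0 gk.
Qed.

End HingeLoss.

Theorem mainTheorem6 (R : realFieldType) (m : nat) (hm : (2 <= m)%N)
  (p : 'I_m -> R) (hp0 : forall l, 0 <= p l) (hp1 : \sum_(l < m) p l = 1)
  (ystar : 'I_m) (hmax : forall y, p y <= p ystar) :
  (forall g : 'I_m -> R, Num.min 1 (2 * (1 - p ystar)) <= hinge_risk p g) /\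
  (p ystar < 2^-1 -> forall c : R,
     hinge_risk p (fun _ => c) = Num.min 1 (2 * (1 - p ystar))) /\
  (2^-1 <= p ystar -> forall c : R,
     hinge_risk p (fun j => c + (j == ystar)%:R) = Num.min 1 (2 * (1 - p ystar))).
Proof.
split; first by move=> g; exact: hinge_risk_ge_min.
split=> hp c.
- by rewrite hinge_risk_const // min_l //; lra.
- by rewrite hinge_risk_bump // min_r //; lra.
Qed.
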